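(* Let $X$ be a complex Banach space and let $T\in\mathcal{B}(X)$ be a power-bounded operator. Suppose that $\omega:\mathbb{Z}_+\to(0,\infty)$ is a decreasing function such that $\|T^n(I-T)\|\leq\omega(n)$ for all $n\in\mathbb{Z}_+$ and $\omega(n)\to0$ as $n\to\infty$, and define $\omega^*:(0,\infty)\to\mathbb{Z}_+$ by $\omega^*(s):=\min\{n\in\mathbb{Z}_+:\omega(n)\leq s\}$. Then $\sigma(T)\cap\mathbb{T}\subset\{1\}$ and, for any $c\in(0,1)$, $$\|R(\mathrm{e}^{\mathrm{i}\theta},T)\|=O\left(\frac{1}{|\theta|}+\omega^*(c|\theta|)\right)\quad\text{as }|\theta|\to0.$$
   Context: $T$ is power-bounded if $\sup_{n\geq0}\|T^n\|<\infty$. $\mathbb{T}$ is the unit circle, $\sigma(T)$ the spectrum, and $R(\lambda,T)=(\lambda-T)^{-1}$ the resolvent for $\lambda$ in the resolvent set. *)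

From HB Require Import structures.
From mathcomp Require Import all_boot all_order all_algebra.
From mathcomp Require Import all_classical all_reals all_analysis.
From mathcomp Require Import complex.
Set Implicit Arguments. Unset Strict Implicit. Unset Printing Implicit Defensive.
Import Order.TTheory GRing.Theory Num.Theory.
Import numFieldNormedType.Exports.
Local Open Scope ring_scope.
Local Open Scope complex_scope.

(* A complex Banach space is a [completeNormedModType R[i]] (norms are
   complex numbers with zero imaginary part, compared in R[i]). *)

Definition opbound (R : realType) (X : normedModType R[i]) (A : X -> X) (M : R) :=
  forall x : X, `|A x| <= M%:C * `|x|.

Definition bounded_op (R : realType) (X : normedModType R[i]) (A : X -> X) :=
  linear A /\ exists M : R, opbound A M.

Definition shift_op (R : realType) (X : normedModType R[i]) (T : X -> X) (l : R[i]) : X -> X :=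
  fun x => l *: x - T x.

Definition is_resolvent (R : realType) (X : normedModType R[i]) (T : X -> X) (l : R[i]) (S : X -> X) :=
  bounded_op S /\ cancel (shift_op T l) S /\ cancel S (shift_op T l).

(* l belongs to the resolvent set of T (i.e. l is not in sigma(T)). *)
Definition in_resolvent_set (R : realType) (X : normedModType R[i]) (T : X -> X) (l : R[i]) :=
  exists S : X -> X, is_resolvent T l S.

Definition expi (R : realType) (t : R) : R[i] := (cos t +i* sin t)%C.

(* omega^*(s) = min { n : omega n <= s } (0 if the set is empty, which cannot
   happen under the hypotheses for s > 0). *)
Definition omega_star (R : realType) (w : nat -> R) (s : R) : nat :=
  match pselect (exists n, w n <= s) with
  | left h => ex_minn h
  | right _ => 0%N
  end.

(* For |l| = 1, l <> 1 and any n, the operator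
     C_n = \sum_(k < n) l^-(k+1) T^k + l^-n (l - 1)^-1 T^n
   commutes with T and satisfies (l - T) C_n = I + E_n with
   E_n = l^-n (l - 1)^-1 T^n (I - T), so ||E_n|| <= w(n) / |l - 1|.  Once
   w(n) <= q |l - 1| for some q < 1, a Neumann series inverts I + E_n and
   R(l, T) = C_n (I + E_n)^-1 has norm at most (n M + M / |l - 1|) / (1 - q),
   M being the power bound.  For l = e^(it) we have
   |l - 1| >= |sin t| >= |t| - |t|^3 / 6, and n = w^*(c |t|) gives the estimate. *)

From HB Require Import structures.
From mathcomp Require Import all_boot all_order all_algebra.
From mathcomp Require Import all_classical all_reals all_analysis.
From mathcomp Require Import complex.
From mathcomp Require Import ring lra.
Import Order.TTheory GRing.Theory Num.Theory.
Import numFieldNormedType.Exports.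
Local Open Scope ring_scope.
Local Open Scope complex_scope.
Local Open Scope classical_set_scope.

Section LinearFunctions.
Context {K : comNzRingType} {V : lmodType K}.
Implicit Types (A B : V -> V).

Lemma linD A : linear A -> forall u v, A (u + v) = A u + A v.
Proof. by move=> hA u v; rewrite -[u in LHS]scale1r hA scale1r. Qed.

Lemma lin0 A : linear A -> A 0 = 0.
Proof. by move=> hA; apply: (addIr (A 0)); rewrite -linD// !add0r. Qed.

Lemma linZ A : linear A -> forall a u, A (a *: u) = a *: A u.
Proof. by move=> hA a u; rewrite -[_ *: u]addr0 hA lin0// addr0. Qed.

Lemma linB A : linear A -> forall u v, A (u - v) = A u - A v.
Proof. by move=> hA u v; rewrite linD// -scaleN1r linZ// scaleN1r. Qed.

Lemma lin_sum A : linear A -> forall n (F : nat -> V),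
  A (\sum_(k < n) F k) = \sum_(k < n) A (F k).
Proof.
move=> hA; elim=> [|n IH] F; first by rewrite !big_ord0 lin0.
by rewrite !big_ord_recr /= linD// IH.
Qed.

Lemma linear_iter A : linear A -> forall n, linear (iter n A).
Proof. by move=> hA; elim=> [|n IH] a u v //=; rewrite IH hA. Qed.

Lemma linear_scale A (c : K) : linear A -> linear (fun x => c *: A x).
Proof. by move=> hA b u v; rewrite hA scalerDr !scalerA mulrC. Qed.

Lemma linear_add A B : linear A -> linear B -> linear (fun x => A x + B x).
Proof. by move=> hA hB b u v; rewrite hA hB scalerDr addrACA. Qed.

Lemma linear_sumf n (F : nat -> V -> V) : (forall k, linear (F k)) ->
  linear (fun x => \sum_(k < n) F k x).
Proof.
move=> hF; elim: n => [|n IH] b u v; first by rewrite !big_ord0 scaler0 addr0.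
by rewrite !big_ord_recr /= IH hF scalerDr addrACA.
Qed.

Lemma linear_shift_op A (l : K) : linear A -> linear (fun x => l *: x - A x).
Proof.
move=> hA; apply: linear_add; first by move=> b u v; rewrite scalerDr !scalerA mulrC.
by move=> b u v; rewrite hA opprD scalerN.
Qed.
End LinearFunctions.

Section ComplexBanach.
Context {R : realType} {X : completeNormedModType R[i]}.

Lemma ger0_ReE {z : R[i]} : 0 <= z -> z = (complex.Re z)%:C.
Proof. by move=> /ger0_real/RRe_real. Qed.

Lemma opbound_le (A : X -> X) (m m' : R) : m <= m' -> opbound A m -> opbound A m'.
Proof. by move=> mm' hA x; rewrite (le_trans (hA x))// ler_wpM2r// lecR. Qed.

Lemma opbound_cvg {A : X -> X} {q : R} {u : X ^nat} {y : X} :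
  linear A -> 0 <= q -> opbound A q -> u @ \oo --> y -> (A \o u) @ \oo --> A y.
Proof.
move=> hA q0 hq /cvgrPdist_lt uy; apply/cvgrPdist_lt => e e0.
have q1 : 0 < q%:C + 1 :> R[i] by rewrite ltr_wpDl// ler0c.
near=> n; rewrite /= -linB// (le_lt_trans (hq _))//.
rewrite (@le_lt_trans _ _ ((q%:C + 1) * `|y - u n|))// ?ler_wpM2r ?lerDl//.
by rewrite -ltr_pdivlMl//; near: n; apply: uy; rewrite mulr_gt0// invr_gt0.
Unshelve. all: by end_near. Qed.

Lemma cvg_series_geometric_bound (u : X ^nat) (C q : R) :
  `|q| < 1 -> (forall k, `|u k| <= (C * q ^+ k)%:C) -> cvgn (series u).
Proof.
move=> q1 hu; have /cauchy_cvgP/cauchy_seriesP geo := @is_cvg_geometric_series _ C q q1.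
apply/cauchy_cvgP/cauchy_seriesP => e e0.
have eE := ger0_ReE (ltW e0).
have e0' : 0 < complex.Re e by rewrite -ltcR -eE.
apply: filterS (geo _ e0') => -[m n] /= hmn.
rewrite (le_lt_trans (ler_norm_sum _ _ _))// (le_lt_trans (ler_sum _ (fun k _ => hu k)))//.
rewrite -(big_morph _ (@rmorphD _ _ (real_complex R)) (rmorph0 _)).
by rewrite eE ltcR (le_lt_trans (ler_norm _)).
Qed.

Lemma contraction_surjective {E : X -> X} {q : R} :
  linear E -> 0 <= q < 1 -> opbound E q -> forall x, exists y, y + E y = x.
Proof.
move=> hE /andP[q0 q1] hq x.
pose u k := iter k (fun z => - E z) x.
have hu k : `|u k| <= (complex.Re `|x| * q ^+ k)%:C.
  elim: k => [|k IH]; first by rewrite expr0 mulr1 -ger0_ReE.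
  rewrite /u iterS -/(u k) normrN (le_trans (hq _))// exprS mulrCA rmorphM.
  by rewrite ler_wpM2l// ler0c.
have s_rec n : series u n.+1 = x - E (series u n).
  by rewrite /series /= big_nat_recl// !big_mkord (lin_sum _ hE) -sumrN.
have sy : series u @ \oo --> limn (series u).
  by apply: (@cvg_series_geometric_bound _ _ q _ hu); rewrite ger0_norm.
set y := limn (series u) in sy *.
have sx : series u @ \oo --> x - E y.
  rewrite -cvg_shiftS (_ : [sequence _]_n = (fun n => x - E (series u n))).
    exact: cvgB (cvg_cst x) (opbound_cvg hE q0 hq sy).
  by apply/funext => n; rewrite /= s_rec.
have yE : y = x - E y by exact: cvg_lim sx.
by exists y; rewrite {1}yE subrK.
Qed.
End ComplexBanach.

Section ApproximateInverse.
Context {R : realType} {X : completeNormedModType R[i]}.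

Lemma contraction_add_lower_bound {E : X -> X} {q : R} :
  opbound E q -> forall u, (1 - q)%:C * `|u| <= `|u + E u|.
Proof.
move=> hE u; rewrite rmorphB /= mulrBl mul1r lerBlDr.
have := ler_normB (u + E u) (E u); rewrite addrK => /le_trans; apply.
by rewrite lerD2l.
Qed.

Lemma resolvent_of_approx_inverse {T C E : X -> X} {l : R[i]} {K q : R} :
  linear T -> linear C -> (forall x, C (T x) = T (C x)) ->
  (forall x, shift_op T l (C x) = x + E x) ->
  0 <= K -> opbound C K -> 0 <= q < 1 -> opbound E q ->
  exists S, is_resolvent T l S /\ opbound S (K / (1 - q)).
Proof.
(* As C commutes with T, also C (l - T) = I + E, which makes l - T injective. *)
move=> hT hC CT CE K0 hCK /andP[q0 q1] hEq.
have hsh : linear (shift_op T l) := linear_shift_op _ l hT.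
have Edef x : E x = shift_op T l (C x) - x by rewrite CE addrC addKr.
have hE : linear E.
  by move=> b u v; rewrite !Edef hC (linD _ hsh) (linZ _ hsh) opprD addrACA -scalerBr.
have CS u : C (shift_op T l u) = u + E u.
  by rewrite /shift_op (linB _ hC) (linZ _ hC) CT -CE.
have q1' : 0 < (1 - q)%:C by rewrite ltcR subr_gt0.
have inj u : shift_op T l u = 0 -> u = 0.
  move=> hu; have := contraction_add_lower_bound hEq u.
  by rewrite -CS hu lin0// normr0 pmulr_rle0// normr_le0 => /eqP.
have qq : 0 <= q < 1 by rewrite q0.
pose g x := proj1_sig (cid (contraction_surjective hE qq hEq x)).
have gP x : g x + E (g x) = x := proj2_sig (cid (contraction_surjective hE qq hEq x)).
have right x : shift_op T l (C (g x)) = x by rewrite CE gP.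
have left x : C (g (shift_op T l x)) = x.
  by apply/eqP; rewrite -subr_eq0; apply/eqP/inj; rewrite (linB _ hsh) right subrr.
have Sb : opbound (C \o g) (K / (1 - q)).
  move=> x; apply: le_trans (hCK (g x)) _.
  rewrite rmorphM fmorphV /= -mulrA ler_wpM2l ?ler0c// mulrC ler_pdivlMr// mulrC.
  by have := contraction_add_lower_bound hEq (g x); rewrite gP.
have Slin : linear (C \o g).
  move=> b u v; apply/eqP; rewrite -subr_eq0; apply/eqP/inj.
  by rewrite (linB _ hsh) (linD _ hsh) (linZ _ hsh) /= !right subrr.
by exists (C \o g); do !split => //; exists (K / (1 - q)).
Qed.
End ApproximateInverse.

Section ResolventOnCircle.
Context {R : realType} {X : completeNormedModType R[i]}.
Context {T : X -> X} {M : R} {l : R[i]} {n : nat} {d q W : R}.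
Hypotheses (hT : linear T) (M0 : 0 <= M) (hM : forall k, opbound (iter k T) M).
Hypotheses (l1 : `|l| = 1) (hd : `|l - 1| = d%:C) (d0 : 0 < d).
Hypotheses (hW : opbound (fun x => iter n T (x - T x)) W) (Wq : W <= q * d).

Let a := l^-1.
Let la : l * a = 1. Proof. by rewrite mulfV// -normr_eq0 l1 oner_eq0. Qed.
Let a1 : `|a| = 1. Proof. by rewrite normfV l1 invr1. Qed.
Let ln1 : l - 1 != 0. Proof. by rewrite -normr_eq0 hd gt_eqF// ltcR. Qed.

Let Bf x := \sum_(k < n) a ^+ k.+1 *: iter k T x.
Let c := a ^+ n / (l - 1).
Let Cf x := Bf x + c *: iter n T x.
Let Ef x := c *: iter n T (x - T x).

Lemma shift_op_neumann_sum x : shift_op T l (Bf x) = x - a ^+ n *: iter n T x.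
Proof.
rewrite /Bf; elim: n => [|m IH].
  by rewrite big_ord0 /shift_op scaler0 lin0// subrr expr0 scale1r subrr.
rewrite big_ord_recr /= /shift_op scalerDr (linD _ hT) (linZ _ hT) opprD addrACA.
by rewrite [X in X + _]IH scalerA exprS mulrA la mul1r addrA subrK.
Qed.

Let lc : l * c = a ^+ n + c.
Proof. by apply: (mulIf ln1); rewrite mulrDl /c -!mulrA mulVf//; ring. Qed.

Let hsh : linear (shift_op T l). Proof. exact: linear_shift_op. Qed.
Let hTn : linear (iter n T). Proof. exact: linear_iter. Qed.

Lemma shift_op_approx_inverse x : shift_op T l (Cf x) = x + Ef x.
Proof.
rewrite /Cf (linD _ hsh) (linZ _ hsh) shift_op_neumann_sum /shift_op.
rewrite scalerBr scalerA [c * l]mulrC lc scalerDl /Ef (linB _ hTn) -iterS iterSr.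
by rewrite scalerBr -addrA; congr (x + _); rewrite addrA addKr.
Qed.

Let normc : `|c| = d%:C^-1.
Proof. by rewrite normrM normrX a1 expr1n mul1r normfV hd. Qed.

Lemma linear_approx_inverse : linear Cf.
Proof.
apply: linear_add; last exact: linear_scale.
apply: (@linear_sumf _ _ n (fun k x => a ^+ k.+1 *: iter k T x)) => k.
exact/linear_scale/linear_iter.
Qed.

Lemma approx_inverse_comm x : Cf (T x) = T (Cf x).
Proof.
rewrite /Cf /Bf (linD _ hT) (linZ _ hT) -iterSr iterS.
rewrite (lin_sum _ hT n (fun k => a ^+ k.+1 *: iter k T x)).
by congr (_ + _); apply: eq_bigr => k _; rewrite (linZ _ hT) -iterSr iterS.
Qed.

Lemma opbound_approx_inverse : opbound Cf (n%:R * M + M / d).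
Proof.
move=> x; rewrite (le_trans (ler_normD _ _))// rmorphD mulrDl lerD//.
  apply: le_trans (ler_norm_sum _ _ _) _.
  apply: le_trans (ler_sum (G := fun _ => M%:C * `|x|) _ _) _ => [k _|].
    by rewrite normrZ normrX a1 expr1n mul1r hM.
  by rewrite sumr_const card_ord rmorphM /= rmorph_nat -mulrA mulr_natl.
rewrite normrZ normc rmorphM fmorphV /= [M%:C / _]mulrC -mulrA ler_wpM2l ?hM//.
by rewrite invr_ge0 ler0c ltW.
Qed.

Lemma opbound_approx_defect : opbound Ef q.
Proof.
move=> x; rewrite normrZ normc.
apply: le_trans (ler_wpM2l _ (hW x)) _; first by rewrite invr_ge0 ler0c ltW.
by rewrite mulrA ler_wpM2r// -fmorphV -rmorphM lecR ler_pdivrMl// mulrC.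
Qed.

Lemma resolvent_on_circle : 0 <= q < 1 ->
  exists S, is_resolvent T l S /\ opbound S ((n%:R * M + M / d) / (1 - q)).
Proof.
move=> hq.
have := resolvent_of_approx_inverse hT linear_approx_inverse approx_inverse_comm shift_op_approx_inverse.
apply; [|exact: opbound_approx_inverse|exact: hq|exact: opbound_approx_defect].
by apply: addr_ge0; [exact: mulr_ge0 | exact: divr_ge0 (ltW d0)].
Qed.

End ResolventOnCircle.

Section TrigBounds.
Context {R : realType}.

Lemma ger0_derive_ndecr0 (f df : R -> R) (x : R) : 0 <= x ->
  (forall y : R, is_derive y 1 f (df y)) -> (forall y, 0 <= y -> 0 <= df y) -> f 0 <= f x.
Proof.
move=> x0 hd hp; rewrite -subr_ge0.
have [|y yI ->] := @MVT_segment R f df 0 x x0 (fun y _ => hd y) _.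
  by apply: derivable_within_continuous => y _; exact: ex_derive.
by rewrite subr0 mulr_ge0// hp//; move: yI; rewrite in_itv /= => /andP[].
Qed.

Lemma sin_le_id (x : R) : 0 <= x -> sin x <= x.
Proof.
move=> x0; have : 0 - sin 0 <= x - sin x.
  apply: (@ger0_derive_ndecr0 (fun z => z - sin z) (fun z => 1 - cos z)) => //.
by rewrite sin0; lra.
Qed.

Lemma cos_ge_taylor (x : R) : 0 <= x -> 1 - x ^+ 2 / 2 <= cos x.
Proof.
move=> x0; have : cos 0 - 1 + 0 ^+ 2 / 2 <= cos x - 1 + x ^+ 2 / 2.
  apply: (@ger0_derive_ndecr0 (fun z => cos z - 1 + z ^+ 2 / 2) (fun z => - sin z + z)) => // y.
    by apply: is_derive_eq; rewrite !scaler0 subr0 add0r /GRing.scale /=; field.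
  by move=> /sin_le_id; lra.
by rewrite cos0 expr0n /=; lra.
Qed.

Lemma sin_ge_taylor (x : R) : 0 <= x -> x - x ^+ 3 / 6 <= sin x.
Proof.
move=> x0; have : sin 0 - 0 + 0 ^+ 3 / 6 <= sin x - x + x ^+ 3 / 6.
  apply: (@ger0_derive_ndecr0 (fun z => sin z - z + z ^+ 3 / 6)
    (fun z => cos z - 1 + z ^+ 2 / 2)) => // y.
    by apply: is_derive_eq; rewrite /GRing.scale /=; field.
  by move=> /cos_ge_taylor; lra.
by rewrite sin0 expr0n /=; lra.
Qed.

Lemma norm_expi (t : R) : `|expi t| = 1.
Proof. by rewrite normc_def /expi /= cos2Dsin2 sqrtr1. Qed.

Lemma norm_expi_sub1_ge (t : R) : (`|t| - `|t| ^+ 3 / 6)%:C <= `|expi t - 1|.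
Proof.
rewrite normc_def /expi /= subr0 lecR; apply: (@le_trans _ _ `|sin t|).
  have -> : `|sin t| = `|sin `|t| | by case: (ler0P t) => _; rewrite ?sinN ?normrN.
  exact: le_trans (sin_ge_taylor _ (normr_ge0 t)) (ler_norm _).
by rewrite -sqrtr_sqr ler_sqrt ?lerDr ?sqr_ge0// addr_ge0 ?sqr_ge0.
Qed.
End TrigBounds.

Lemma omega_star_le (R : realType) (w : nat -> R) (s : R) :
  (exists n, w n <= s) -> w (omega_star w s) <= s.
Proof. by rewrite /omega_star; case: pselect => // h _; case: ex_minnP. Qed.

Lemma resolvent_bound_arith (R : realType) (M c a d n : R) :
  0 < M -> 0 < c < 1 -> 0 < a -> (1 + c) / 2 * a <= d -> 0 <= n ->
  (n * M + M / d) / (1 - 2 * c / (1 + c)) <= 4 * M / (1 - c) * (a^-1 + n).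
Proof.
move=> M0 /andP[c0 c1] a0 ad n0.
have d0 : 0 < d by apply: lt_le_trans ad; rewrite mulr_gt0 ?divr_gt0 ?addr_gt0.
have c1' : 1 - c != 0 by rewrite subr_eq0 gt_eqF.
have -> : (n * M + M / d) / (1 - 2 * c / (1 + c)) = (n * M + M / d) * (1 + c) / (1 - c).
  by field; rewrite c1' !gt_eqF ?addr_gt0.
rewrite [leRHS]mulrAC ler_wpM2r ?invr_ge0 ?subr_ge0 1?ltW//.
have D0 : 0 < d^-1 by rewrite invr_gt0.
have A0 : 0 < a^-1 by rewrite invr_gt0.
have dD : d * d^-1 = 1 by rewrite mulfV ?gt_eqF.
have aA : a * a^-1 = 1 by rewrite mulfV ?gt_eqF.
have hD : d^-1 * (1 + c) <= 2 * a^-1.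
  by have := ler_wpM2r (ltW A0) (ler_wpM2l (ltW D0) ad); nra.
have nM0 : 0 <= n * M by nra.
have nMc0 : 0 <= n * M * (1 - c) by nra.
have MA0 : 0 <= M * a^-1 by nra.
have := ler_wpM2l (ltW M0) hD; nra.
Qed.

Lemma cvgr0_ex_le (R : realType) (w : nat -> R) :
  (w @ \oo --> (0 : R))%classic -> forall e, 0 < e -> exists n, w n <= e.
Proof.
move=> /cvgrPdist_lt w0 e e0; have [N _ HN] := w0 e e0.
by exists N; have := HN N (leqnn N); rewrite sub0r normrN => /ltW; apply/le_trans/ler_norm.
Qed.

Section ResolventEstimates.
Context {R : realType} {X : completeNormedModType R[i]}.
Context {T : X -> X} {M : R} {w : nat -> R}.
Hypotheses (hT : linear T) (M0 : 0 < M) (hM : forall k, opbound (iter k T) M).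
Hypothesis hw : forall n, opbound (fun x => iter n T (x - T x)) (w n).
Hypothesis w_small : forall e, 0 < e -> exists n, w n <= e.

Lemma in_resolvent_set_circle l : `|l| = 1 -> l != 1 -> in_resolvent_set T l.
Proof.
move=> l1 ln1; have hd := ger0_ReE (normr_ge0 (l - 1)).
set d := complex.Re _ in hd.
have d0 : 0 < d by rewrite -ltcR -hd normr_gt0 subr_eq0.
have [n wn] := w_small _ (divr_gt0 d0 (ltr0Sn _ 1)).
have Wq : w n <= 1 / 2 * d by lra.
have [|S [hS _]] := resolvent_on_circle hT (ltW M0) hM l1 hd d0 (hw n) Wq; first lra.
by exists S.
Qed.

Lemma resolvent_estimate (c : R) : 0 < c < 1 -> forall t : R, 0 < `|t| < 1 - c ->
  exists S, is_resolvent T (expi t) S /\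
    opbound S (4 * M / (1 - c) * (`|t|^-1 + (omega_star w (c * `|t|))%:R)).
Proof.
(* Constants: |e^(it) - 1| >= (1 + c) / 2 * |t| when |t| < 1 - c, and
   q := 2 c / (1 + c) < 1 turns w(n) <= c |t| into w(n) <= q |e^(it) - 1|. *)
move=> /andP[c0 c1] t /andP[t0 tc].
set n := omega_star w (c * `|t|).
have wn : w n <= c * `|t| by apply/omega_star_le/w_small; rewrite mulr_gt0.
have hd := ger0_ReE (normr_ge0 (expi t - 1)); set d := complex.Re _ in hd.
have dge : (1 + c) / 2 * `|t| <= d.
  have := norm_expi_sub1_ge t; rewrite hd lecR; apply: le_trans.
  have : `|t| ^+ 2 <= 1 - c by nra.
  rewrite exprS; nra.
have d0 : 0 < d by apply: lt_le_trans dge; rewrite mulr_gt0 ?divr_gt0 ?addr_gt0.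
have Wq : w n <= 2 * c / (1 + c) * d.
  apply: le_trans wn _.
  have -> : c * `|t| = 2 * c / (1 + c) * ((1 + c) / 2 * `|t|).
    by field; rewrite gt_eqF ?addr_gt0.
  by rewrite ler_wpM2l// divr_ge0 ?mulr_ge0 ?addr_ge0// ltW.
have q01 : 0 <= 2 * c / (1 + c) < 1.
  by apply/andP; split; [apply: divr_ge0 | rewrite ltr_pdivrMr]; lra.
have [S [hS Sb]] := resolvent_on_circle hT (ltW M0) hM (norm_expi t) hd d0 (hw n) Wq q01.
exists S; split=> //; apply: opbound_le Sb.
by apply: resolvent_bound_arith; rewrite ?c0 ?c1.
Qed.

End ResolventEstimates.

Theorem theorem2p4 (R : realType) (X : completeNormedModType R[i]) (T : X -> X)
  (w : nat -> R) :
  bounded_op T ->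
  (exists M : R, forall n : nat, opbound (iter n T) M) ->
  (forall n : nat, 0 < w n) ->
  (forall m n : nat, (m <= n)%N -> w n <= w m) ->
  (forall n : nat, opbound (fun x => iter n T (x - T x)) (w n)) ->
  (w @ \oo --> (0 : R))%classic ->
  (forall l : R[i], `|l| = 1 -> l != 1 -> in_resolvent_set T l) /\
  (forall c : R, 0 < c < 1 ->
     exists K : R, exists d : R, 0 < K /\ 0 < d /\
       forall t : R, 0 < `|t| < d ->
         exists S : X -> X, is_resolvent T (expi t) S /\
           opbound S (K * (`|t|^-1 + (omega_star w (c * `|t|))%:R))).
Proof.
move=> [hT _] [M hM] _ _ hw /cvgr0_ex_le w_small.
have M1gt0 : 0 < `|M| + 1 by rewrite ltr_pwDr.
have hM1 k : opbound (iter k T) (`|M| + 1).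
  by apply: opbound_le (hM k); rewrite (le_trans (ler_norm M))// lerDl.
split; first exact: in_resolvent_set_circle hT M1gt0 hM1 hw w_small.
move=> c c01; have /andP[_ c1] := c01.
exists (4 * (`|M| + 1) / (1 - c)), (1 - c).
split; first by rewrite !mulr_gt0 ?invr_gt0 ?subr_gt0.
split; first by rewrite subr_gt0.
exact: resolvent_estimate hT M1gt0 hM1 hw w_small c c01.
Qed.
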